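(* For $0<u<v<1$ and all $k\in\mathbb R$: (i) $(\mathcal E^c_u)'(k-)-(v-u)\le(\mathcal E^c_v)'(k-)\le(\mathcal E^c_u)'(k-)$; (ii) $(\mathcal E^c_u)'(k+)-(v-u)\le(\mathcal E^c_v)'(k+)\le(\mathcal E^c_u)'(k+)$.
   Context: Let $\mu,\nu$ be probability measures on $\mathbb R$ with finite first moments and $\mu\le_{cx}\nu$. Put $P_\eta(k)=\int(k-x)^+\eta(dx)$, $D=P_\nu-P_\mu$, and assume $\{k:D(k)>0\}$ is an interval. Let $G$ be the left-continuous quantile function of $\mu$. For $u\in(0,1)$ let $\mu_u(A)=\mu(A\cap(-\infty,G(u)))+\big(u-\mu((-\infty,G(u)))\big)\delta_{G(u)}(A)$ and $\mathcal E_u=P_\nu-P_{\mu_u}$. $f^c$ is the largest convex function lying below $f$; primes with $\pm$ denote one-sided derivatives. *)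

From mathcomp Require Import all_boot all_order all_algebra.
From mathcomp Require Import all_classical all_reals all_analysis.
Set Implicit Arguments. Unset Strict Implicit. Unset Printing Implicit Defensive.
Import Order.TTheory GRing.Theory Num.Theory.
Import numFieldNormedType.Exports.
Local Open Scope ring_scope.
Local Open Scope classical_set_scope.

Section Defs.
Variable R : realType.

Definition convexR (g : R -> R) : Prop :=
  forall x y t : R, 0 <= t <= 1 ->
    g (t * x + (1 - t) * y) <= t * g x + (1 - t) * g y.

Definition convex_env (f : R -> R) (x : R) : R :=
  sup [set g x | g in [set g : R -> R | convexR g /\ forall y, g y <= f y]].

Definition left_deriv (f : R -> R) (k : R) : R :=
  lim ((f y - f k) / (y - k) @[y --> k^'-]).
Definition right_deriv (f : R -> R) (k : R) : R :=
  lim ((f y - f k) / (y - k) @[y --> k^'+]).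

Definition pos_part_put (k x : R) : R := Num.max (k - x) 0.

Definition put_fun (eta : probability R R) (k : R) : R :=
  fine (\int[eta]_x (pos_part_put k x)%:E)%E.

Definition cx_le (mu nu : probability R R) : Prop :=
  forall f : R -> R, convexR f ->
    (\int[mu]_x (f x)%:E <= \int[nu]_x (f x)%:E)%E.

Definition finite_first_moment (eta : probability R R) : Prop :=
  eta.-integrable [set: R] (fun x => x%:E).

Definition quantile (mu : probability R R) (u : R) : R :=
  inf [set x : R | (u%:E <= mu `]-oo, x])%E].

(* P_{mu_u}(k), where
   mu_u(A) = mu(A /\ (-oo, G u)) + (u - mu((-oo, G u))) delta_{G u}(A);
   the integral of (k - .)^+ against mu_u, written out. *)
Definition put_fun_sub (mu : probability R R) (u k : R) : R :=
  fine (\int[mu]_(x in `]-oo, quantile mu u[) (pos_part_put k x)%:E)%E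
  + (u - fine (mu `]-oo, quantile mu u[)) * pos_part_put k (quantile mu u).

Definition Dfun (mu nu : probability R R) (k : R) : R :=
  put_fun nu k - put_fun mu k.

Definition Efun (mu nu : probability R R) (u : R) (k : R) : R :=
  put_fun nu k - put_fun_sub mu u k.

End Defs.

From mathcomp Require Import all_boot all_order all_algebra.
From mathcomp Require Import all_classical all_reals all_analysis.
From mathcomp Require Import ring lra measurable_realfun.
Import Order.TTheory GRing.Theory Num.Theory.
Import numFieldNormedType.Exports.
Local Open Scope ring_scope.
Local Open Scope classical_set_scope.
Set Implicit Arguments. Unset Strict Implicit. Unset Printing Implicit Defensive.

(* Since E_u - E_v = P_{mu_v} - P_{mu_u}, two facts suffice.

   Envelopes: if g2 - g1 - c id is nondecreasing, then
   (g1^c)'(k+-) + c <= (g2^c)'(k+-).  At a point x where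
   g2^c x <= g1^c x + (g2 - g1) x, the line through (x, g2^c x) of slope
   (g1^c)'(x+) + c lies below g2, hence below g2^c, which bounds
   (g2^c)'(x+) from below; otherwise the mirror argument works with left
   derivatives.  Either way
   (g1^c)'(x-) + c <= (g2^c)'(x+), and the one-sided bounds at k follow by
   letting x tend to k.

   Truncated puts: with A = ]-oo, G u[ and B = [G u, G v[,
   P_{mu_v} - P_{mu_u} = int_B (k - x)^+ dmu + (v - mu(]-oo, G v[)) (k - G v)^+
                         - (u - mu A) (k - G u)^+,
   and mu(]-oo, G w[) <= w <= mu(]-oo, G w]) together with the fact that the
   increments of (k - x)^+ in k lie in [0, y - x] and decrease in x show that
   this difference is nondecreasing in k with slopes at most v - u.

   Both facts are used with c = 0 and c = u - v; E_u and E_v are nonnegative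
   because P_{mu_w} <= P_mu <= P_nu, so 0 is a convex minorant. *)

(** * Slopes and one-sided derivatives of convex functions *)

Section ConvexSlopes.
Variable R : realType.
Implicit Types (F : R -> R) (a b c k m x y z : R).

Definition slope F x y := (F y - F x) / (y - x).

Lemma slopeC F x y : slope F x y = slope F y x.
Proof.
rewrite /slope; have [->|_] := eqVneq x y; first by [].
by rewrite -[F x - F y]opprB -[x - y]opprB mulNr invrN mulrN opprK.
Qed.

Lemma convex_three_points F a b c : convexR F -> a < b -> b < c ->
  (c - a) * F b <= (c - b) * F a + (b - a) * F c.
Proof.
move=> cF ab bc; have ca : 0 < c - a by lra.
have t01 : 0 <= (c - b) / (c - a) <= 1.
  by rewrite divr_ge0 ?ler_pdivrMr ?mul1r; lra.
have := ler_wpM2l (ltW ca) (cF a c _ t01).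
have -> : (c - b) / (c - a) * a + (1 - (c - b) / (c - a)) * c = b by field; lra.
by have -> : (c - a) * ((c - b) / (c - a) * F a + (1 - (c - b) / (c - a)) * F c)
  = (c - b) * F a + (b - a) * F c by field; lra.
Qed.

Lemma convex_slope_leR F a b c : convexR F -> a < b -> b < c ->
  slope F a b <= slope F a c.
Proof.
move=> cF ab bc; have := convex_three_points cF ab bc.
rewrite /slope ler_pdivrMr; last lra.
rewrite mulrAC ler_pdivlMr; [nra|lra].
Qed.

Lemma convex_slope_leL F a b c : convexR F -> a < b -> b < c ->
  slope F a c <= slope F b c.
Proof.
move=> cF ab bc; have := convex_three_points cF ab bc.
rewrite /slope ler_pdivrMr; last lra.
rewrite mulrAC ler_pdivlMr; [nra|lra].
Qed.

Section ConvexOneSidedDerivatives.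
Variable F : R -> R.
Hypothesis F_convex : convexR F.

Lemma convex_slope_nondecreasing k y z : y <= z -> y != k -> z != k ->
  slope F k y <= slope F k z.
Proof.
rewrite le_eqVlt => /predU1P[-> //|yz] yk zk.
have [ky|yk'] := ltrP k y; first exact: convex_slope_leR.
have {}yk : y < k by rewrite lt_neqAle yk yk'.
have [kz|zk'] := ltrP k z.
  by rewrite slopeC (le_trans (convex_slope_leR _ yk kz)) ?convex_slope_leL.
have {}zk : z < k by rewrite lt_neqAle zk zk'.
by rewrite slopeC [slope F k z]slopeC convex_slope_leL.
Qed.

Lemma cvg_slope_right k : cvg (slope F k y @[y --> k^'+]).
Proof.
apply: nondecreasing_at_right_is_cvgr.
- near=> x => y z; rewrite !in_itv /= => /andP[ky _] /andP[kz _] yz.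
  by rewrite convex_slope_nondecreasing ?gt_eqF.
- near=> x; exists (slope F k (k - 1)) => _ [y /= + <-].
  rewrite in_itv /= => /andP[ky _].
  by apply: convex_slope_nondecreasing; [lra|rewrite lt_eqF //; lra|rewrite gt_eqF].
Unshelve. all: by end_near.
Qed.

Lemma cvg_slope_left k : cvg (slope F k y @[y --> k^'-]).
Proof.
apply: nondecreasing_at_left_is_cvgr.
- near=> x => y z; rewrite !in_itv /= => /andP[_ yk] /andP[_ zk] yz.
  by rewrite convex_slope_nondecreasing ?lt_eqF.
- near=> x; exists (slope F k (k + 1)) => _ [y /= + <-].
  rewrite in_itv /= => /andP[_ yk].
  by apply: convex_slope_nondecreasing; [lra|rewrite lt_eqF|rewrite gt_eqF //; lra].
Unshelve. all: by end_near.
Qed.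

Lemma right_deriv_le_slope k y : k < y -> right_deriv F k <= slope F k y.
Proof.
move=> ky; apply: limr_le; first exact: cvg_slope_right.
near=> z; apply: convex_slope_nondecreasing; last by rewrite gt_eqF.
- by apply: ltW; near: z; exact: nbhs_right_lt.
- by rewrite gt_eqF //; near: z; exact: nbhs_right_gt.
Unshelve. all: by end_near.
Qed.

Lemma slope_le_left_deriv k y : y < k -> slope F k y <= left_deriv F k.
Proof.
move=> yk; apply: limr_ge; first exact: cvg_slope_left.
near=> z; apply: convex_slope_nondecreasing; [|by rewrite lt_eqF|].
- by apply: ltW; near: z; exact: nbhs_left_gt.
- by rewrite lt_eqF //; near: z; exact: nbhs_left_lt.
Unshelve. all: by end_near.
Qed.

Lemma right_deriv_le_left_deriv k x : k < x -> right_deriv F k <= left_deriv F x.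
Proof.
move=> kx; apply: le_trans (right_deriv_le_slope kx) _.
by rewrite slopeC slope_le_left_deriv.
Qed.

Lemma right_deriv_tangent k y : k <= y -> F k + right_deriv F k * (y - k) <= F y.
Proof.
rewrite le_eqVlt => /predU1P[->|ky]; first by rewrite subrr mulr0 addr0.
by have := right_deriv_le_slope ky; rewrite /slope ler_pdivlMr ?subr_gt0 //; lra.
Qed.

Lemma left_deriv_tangent k y : y <= k -> F k + left_deriv F k * (y - k) <= F y.
Proof.
rewrite le_eqVlt => /predU1P[->|yk]; first by rewrite subrr mulr0 addr0.
by have := slope_le_left_deriv yk; rewrite /slope ler_ndivrMr ?subr_lt0 //; lra.
Qed.

Lemma right_deriv_ge k m : (forall y, k < y -> F k + m * (y - k) <= F y) ->
  m <= right_deriv F k.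
Proof.
move=> Fm; apply: limr_ge; first exact: cvg_slope_right.
near=> z; have kz : k < z by near: z; exact: nbhs_right_gt.
by have := Fm z kz; rewrite /slope ler_pdivlMr ?subr_gt0 //; lra.
Unshelve. all: by end_near.
Qed.

Lemma left_deriv_le k m : (forall y, y < k -> F k + m * (y - k) <= F y) ->
  left_deriv F k <= m.
Proof.
move=> Fm; apply: limr_le; first exact: cvg_slope_left.
near=> z; have zk : z < k by near: z; exact: nbhs_left_lt.
by have := Fm z zk; rewrite /slope ler_ndivrMr ?subr_lt0 //; lra.
Unshelve. all: by end_near.
Qed.

Lemma left_deriv_le_right_deriv k : left_deriv F k <= right_deriv F k.
Proof.
apply: right_deriv_ge => y ky.
have : left_deriv F k <= slope F k y.
  apply: limr_le; first exact: cvg_slope_left.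
  near=> z; have zk : z < k by near: z; exact: nbhs_left_lt.
  by apply: convex_slope_nondecreasing; [lra|rewrite lt_eqF|rewrite gt_eqF].
by rewrite /slope ler_pdivlMr ?subr_gt0 //; lra.
Unshelve. all: by end_near.
Qed.

End ConvexOneSidedDerivatives.
End ConvexSlopes.

(** * Convex envelopes *)

Lemma le0_of_le_mul_small (R : realFieldType) (d A B : R) : 0 < d ->
  (forall e, 0 < e -> e < d -> B <= A * e) -> B <= 0.
Proof.
move=> d0 BAe; rewrite leNgt; apply/negP => B0.
have [A0|A0] := lerP A 0; first by have := BAe (d / 2); nra.
pose e := Num.min (d / 2) (B / (2 * A)).
have e_d : e <= d / 2 by rewrite ge_min lexx.
have e_BA : e <= B / (2 * A) by rewrite ge_min lexx orbT.
have e0 : 0 < e.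
  by rewrite lt_min; apply/andP; split; [lra|apply: divr_gt0; lra].
have : A * e <= A * (B / (2 * A)) by rewrite ler_pM2l.
have -> : A * (B / (2 * A)) = B / 2 by field; lra.
by have := BAe e e0 ltac:(lra); lra.
Qed.

Section ConvexEnvelope.
Variable R : realType.

Definition has_convex_minorant (g : R -> R) :=
  exists p : R -> R, convexR p /\ forall y, p y <= g y.

Lemma convex_affine (a b : R) : convexR (fun y => a + b * y).
Proof.
by move=> x y t _; rewrite [leRHS](_ : _ = a + b * (t * x + (1 - t) * y)) //; ring.
Qed.

Section Envelope.
Variable g : R -> R.

Lemma le_convex_env p : convexR p -> (forall y, p y <= g y) ->
  forall x, p x <= convex_env g x.
Proof.
move=> p_convex pg x; apply: ub_le_sup; last by exists p.
by exists (g x) => _ [q [_ qg] <-].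
Qed.

Hypothesis g_minorant : has_convex_minorant g.

Lemma convex_env_le x : convex_env g x <= g x.
Proof.
apply: ge_sup; first by case: g_minorant => p pg; exists (p x), p.
by move=> _ [p [_ pg] <-].
Qed.

Lemma convex_env_convex : convexR (convex_env g).
Proof.
move=> x y t t01; apply: ge_sup.
  by case: g_minorant => p pg; exists (p (t * x + (1 - t) * y)), p.
move=> _ [p [p_convex pg] <-]; apply: le_trans (p_convex x y t t01) _.
by case/andP: t01 => t0 t1; rewrite lerD // ler_wpM2l ?subr_ge0 // le_convex_env.
Qed.

End Envelope.

Section EnvelopeDerivatives.
Variables (g1 g2 : R -> R) (c : R).
Hypotheses (g1_minorant : has_convex_minorant g1)
  (g2_minorant : has_convex_minorant g2).
Hypothesis g21_incr : forall x y, x <= y ->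
  c * (y - x) <= (g2 y - g1 y) - (g2 x - g1 x).

Local Notation G1 := (convex_env g1).
Local Notation G2 := (convex_env g2).
Let G1_convex : convexR G1 := convex_env_convex g1_minorant.
Let G2_convex : convexR G2 := convex_env_convex g2_minorant.

Lemma right_deriv_env_add_le_at x : G2 x <= G1 x + (g2 x - g1 x) ->
  right_deriv G1 x + c <= right_deriv G2 x.
Proof.
move=> G21x; set m := right_deriv G1 x + c.
have [mL|Lm] := lerP m (left_deriv G2 x).
  exact: le_trans mL (left_deriv_le_right_deriv G2_convex x).
apply: right_deriv_ge => // y xy.
(* The line through (x, G2 x) of slope m lies below g2: on the right by the
   tangent of G1 and the growth of g2 - g1, on the left because m > G2'(x-). *)
suff line_le z : G2 x - m * x + m * z <= g2 z.
  by have := le_convex_env (convex_affine _ _) line_le y; lra.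
have [xz|zx] := lerP x z.
- have := convex_env_le g1_minorant z; have := right_deriv_tangent G1_convex xz.
  have := g21_incr xz; rewrite /m; nra.
- have := convex_env_le g2_minorant z; have := left_deriv_tangent G2_convex (ltW zx).
  nra.
Qed.

Lemma left_deriv_env_add_le_at x : G1 x + (g2 x - g1 x) < G2 x ->
  left_deriv G1 x + c <= left_deriv G2 x.
Proof.
move=> G21x; set m := left_deriv G2 x - c.
suff : left_deriv G1 x <= m by rewrite /m; lra.
have [Rm|mR] := lerP (right_deriv G1 x) m.
  exact: le_trans (left_deriv_le_right_deriv G1_convex x) Rm.
apply: left_deriv_le => // y yx.
suff line_le z : G1 x - m * x + m * z <= g1 z.
  by have := le_convex_env (convex_affine _ _) line_le y; lra.
have [zx|xz] := lerP z x.
- have := convex_env_le g2_minorant z; have := left_deriv_tangent G2_convex zx.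
  have := g21_incr zx; rewrite /m; nra.
- have := convex_env_le g1_minorant z; have := right_deriv_tangent G1_convex (ltW xz).
  nra.
Qed.

Lemma left_deriv_env_add_le_right x : left_deriv G1 x + c <= right_deriv G2 x.
Proof.
have := left_deriv_le_right_deriv G1_convex x.
have := left_deriv_le_right_deriv G2_convex x.
have [/right_deriv_env_add_le_at|/left_deriv_env_add_le_at] :=
  lerP (G2 x) (G1 x + (g2 x - g1 x)); lra.
Qed.

Lemma right_deriv_env_add_le k : right_deriv G1 k + c <= right_deriv G2 k.
Proof.
set m := right_deriv G1 k + c.
apply: right_deriv_ge => // z kz.
suff : G2 k + m * (z - k) - G2 z <= 0 by lra.
(* Use the pointwise bound at k + e for small e > 0; this avoids any
   continuity property of the right derivative. *)
apply: (@le0_of_le_mul_small _ (z - k) (m - right_deriv G2 k)); first lra.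
move=> e e0 ez; set x := k + e.
have kx : k < x by rewrite /x; lra.
have xz : x < z by rewrite /x; lra.
have m_RD2x : m <= right_deriv G2 x.
  have := right_deriv_le_left_deriv G1_convex kx.
  have := left_deriv_env_add_le_right x; rewrite /m; lra.
have := right_deriv_tangent G2_convex (ltW xz).
have := right_deriv_tangent G2_convex (ltW kx).
have : m * (z - x) <= right_deriv G2 x * (z - x) by rewrite ler_pM2r ?subr_gt0.
rewrite (_ : e = x - k); last by rewrite /x; ring.
lra.
Qed.

Lemma left_deriv_env_add_le k : left_deriv G1 k + c <= left_deriv G2 k.
Proof.
set m := left_deriv G2 k - c.
suff : left_deriv G1 k <= m by rewrite /m; lra.
apply: left_deriv_le => // w wk.
suff : G1 k + m * (w - k) - G1 w <= 0 by lra.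
apply: (@le0_of_le_mul_small _ (k - w) (left_deriv G1 k - m)); first lra.
move=> e e0 ew; set x := k - e.
have xk : x < k by rewrite /x; lra.
have wx : w < x by rewrite /x; lra.
have LD1x_m : left_deriv G1 x <= m.
  have := right_deriv_le_left_deriv G2_convex xk.
  have := left_deriv_env_add_le_right x; rewrite /m; lra.
have := left_deriv_tangent G1_convex (ltW wx).
have := left_deriv_tangent G1_convex (ltW xk).
have : m * (w - x) <= left_deriv G1 x * (w - x) by rewrite ler_nM2r ?subr_lt0.
rewrite (_ : e = k - x); last by rewrite /x; ring.
lra.
Qed.

End EnvelopeDerivatives.
End ConvexEnvelope.

(** * Quantiles *)

Section Quantile.
Variables (R : realType) (mu : probability R R).
Implicit Types (A B : set R) (w x y : R).

Definition prob A : R := fine (mu A).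

Lemma probE A : measurable A -> mu A = (prob A)%:E.
Proof. by move=> mA; rewrite /prob fineK ?fin_num_measure. Qed.

Lemma probU A B : measurable A -> measurable B -> A `&` B = set0 ->
  prob (A `|` B) = prob A + prob B.
Proof.
move=> mA mB AB; apply/EFin_inj; rewrite EFinD -!probE ?measureU //.
exact: measurableU.
Qed.

Lemma cvg_mu_rays_bigcup (a : nat -> R) : nondecreasing_seq a ->
  mu `]-oo, a n] @[n --> \oo] --> mu (\bigcup_n `]-oo, a n]).
Proof.
move=> a_incr; apply: nondecreasing_cvg_mu => //.
- by apply: bigcup_measurable => n _; exact: measurable_itv.
- by move=> n m nm; apply/subsetPset/subitvPr; rewrite bnd_simp a_incr.
Qed.

Lemma cvg_mu_rays_bigcap (a : nat -> R) : nonincreasing_seq a ->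
  mu `]-oo, a n] @[n --> \oo] --> mu (\bigcap_n `]-oo, a n]).
Proof.
move=> a_decr; apply: nonincreasing_cvg_mu => //.
- by rewrite (le_lt_trans (probability_le1 _ _)) ?ltry.
- by apply: bigcapT_measurable => n; exact: measurable_itv.
- by move=> n m nm; apply/subsetPset/subitvPr; rewrite bnd_simp a_decr.
Qed.

Definition quantile_set w := [set x : R | (w%:E <= mu `]-oo, x])%E].

Lemma quantile_set_neq0 w : w < 1 -> exists x, quantile_set w x.
Proof.
move=> w1; have nat_incr : nondecreasing_seq (fun n => n%:R : R).
  by move=> n m; rewrite ler_nat.
have rays_cover : \bigcup_n `]-oo, n%:R] = [set: R].
  rewrite -subTset => t _; exists (Num.truncn t).+1 => //=.
  by rewrite in_itv /= ltW // truncnS_gt.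
have := cvg_mu_rays_bigcup nat_incr.
rewrite rays_cover probability_setT => /fine_cvg rays_cvg.
have [N _ muN] := @cvgr_gt _ _ _ _ _ 1 rays_cvg w w1.
exists N%:R; rewrite /quantile_set /= probE; last exact: measurable_itv.
by rewrite lee_fin ltW //; apply: muN => /=.
Qed.

Lemma quantile_set_lbounded w : 0 < w -> exists N, lbound (quantile_set w) N.
Proof.
move=> w0; have opp_nat_decr : nonincreasing_seq (fun n => - n%:R : R).
  by move=> n m; rewrite lerN2 ler_nat.
have rays_cap : \bigcap_n `]-oo, - n%:R] = set0 :> set R.
  rewrite -subset0 => t /(_ (Num.truncn (- t)).+1 I); rewrite /= in_itv /=.
  by have := truncnS_gt (- t); lra.
have := cvg_mu_rays_bigcap opp_nat_decr.
rewrite rays_cap measure0 => /fine_cvg rays_cvg.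
have [N _ muN] := @cvgr_lt _ _ _ _ _ 0 rays_cvg w w0.
exists (- N%:R) => x wx; rewrite leNgt; apply/negP => xN.
have := muN N (leqnn N); rewrite /= -/(prob _) ltNge => /negP; apply.
rewrite -lee_fin -probE; last exact: measurable_itv.
by rewrite (le_trans wx) // le_measure ?inE //; apply/subitvPr; rewrite bnd_simp ltW.
Qed.

Lemma quantile_le w x : 0 < w -> quantile_set w x -> quantile mu w <= x.
Proof.
move=> w0 wx; have [N wN] := quantile_set_lbounded w0.
by apply: ge_inf => //; exists N.
Qed.

Lemma quantile_ge w x : w < 1 -> lbound (quantile_set w) x -> x <= quantile mu w.
Proof.
move=> w1 wx; have [y wy] := quantile_set_neq0 w1.
by apply: lb_le_inf => //; exists y.
Qed.

Lemma le_quantile u v : 0 < u -> u <= v -> v < 1 -> quantile mu u <= quantile mu v.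
Proof.
move=> u0 uv v1; apply: quantile_ge => // y vy; apply: quantile_le => //.
by apply: le_trans vy; rewrite lee_fin.
Qed.

Lemma prob_lt_quantile w : 0 < w -> w < 1 -> prob `]-oo, quantile mu w[ <= w.
Proof.
move=> w0 w1; set G := quantile mu w.
have a_incr : nondecreasing_seq (fun n => G - n.+1%:R^-1).
  by move=> n m nm; rewrite lerD2l lerN2 lef_pV2 ?posrE // ler_nat ltnS.
have rays_cover : \bigcup_n `]-oo, G - n.+1%:R^-1] = `]-oo, G[.
  apply/seteqP; split => y /=.
  - case=> n _; rewrite /= !in_itv /= => yG; apply: (le_lt_trans yG).
    by rewrite ltrBlDr ltrDl invr_gt0.
  - rewrite in_itv /= => /ltr_add_invr[n yn].
    by exists n => //; rewrite /= in_itv /= lerBrDr ltW.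
have := cvg_mu_rays_bigcup a_incr; rewrite rays_cover => rays_cvg.
rewrite -lee_fin -probE; last exact: measurable_itv.
rewrite -(cvg_lim _ rays_cvg) //; apply: lime_le; first exact: cvgP rays_cvg.
apply: nearW => n /=; rewrite leNgt; apply/negP => /ltW /(quantile_le w0).
by rewrite -/G leNgt => /negP; apply; rewrite ltrBlDr ltrDl invr_gt0.
Qed.

Lemma prob_le_quantile w : 0 < w -> w < 1 -> w <= prob `]-oo, quantile mu w].
Proof.
move=> w0 w1; set G := quantile mu w.
have a_decr : nonincreasing_seq (fun n => G + n.+1%:R^-1).
  by move=> n m nm; rewrite lerD2l lef_pV2 ?posrE // ler_nat ltnS.
have := cvg_mu_rays_bigcap a_decr; rewrite -itvNycEbigcap => rays_cvg.
rewrite -lee_fin -probE; last exact: measurable_itv.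
rewrite -(cvg_lim _ rays_cvg) //; apply: lime_ge; first exact: cvgP rays_cvg.
apply: nearW => n /=.
have [N wN] := quantile_set_lbounded w0; have [y wy] := quantile_set_neq0 w1.
have n_gt0 : 0 < n.+1%:R^-1 :> R by rewrite invr_gt0.
have [x wx xG] := inf_adherent n_gt0 (conj (ex_intro _ y wy) (ex_intro _ N wN)).
by rewrite (le_trans wx) // le_measure ?inE //; apply/subitvPr; rewrite bnd_simp ltW.
Qed.

End Quantile.

(** * Put payoffs and their integrals *)

Section PutPayoff.
Variable R : realType.
Implicit Types k s t x y : R.
Local Notation ff := (@pos_part_put R).

Lemma pos_part_put_ge0 k t : 0 <= ff k t.
Proof. by rewrite /pos_part_put le_max lexx orbT. Qed.

Lemma pos_part_put_le k t : ff k t <= `|k| + `|t|.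
Proof.
rewrite /pos_part_put ge_max addr_ge0 // andbT.
exact: le_trans (ler_norm _) (ler_normB _ _).
Qed.

Lemma pos_part_put_incr x y t : x <= y -> 0 <= ff y t - ff x t <= y - x.
Proof.
move=> xy; rewrite /pos_part_put.
by case: (lerP (x - t) 0); case: (lerP (y - t) 0) => *; lra.
Qed.

Lemma pos_part_put_incr_antitone x y s t : x <= y -> s <= t ->
  ff y t - ff x t <= ff y s - ff x s.
Proof.
move=> xy st; rewrite /pos_part_put.
case: (lerP (x - t) 0); case: (lerP (y - t) 0);
  case: (lerP (x - s) 0); case: (lerP (y - s) 0) => *; lra.
Qed.

Lemma convex_pos_part_put k : convexR (ff k).
Proof.
move=> x y t /andP[t0 t1].
have ffx := pos_part_put_ge0 k x; have ffy := pos_part_put_ge0 k y.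
rewrite [X in X <= _]/pos_part_put ge_max; apply/andP; split; last by nra.
move: ffx ffy; rewrite /pos_part_put.
by case: (lerP (k - x) 0); case: (lerP (k - y) 0) => *; nra.
Qed.

Lemma measurable_pos_part_put k : measurable_fun setT (ff k).
Proof.
apply: measurable_maxr (measurable_cst _).
exact: measurable_funB.
Qed.

End PutPayoff.

Section PutIntegral.
Variables (R : realType) (eta : probability R R).
Implicit Types (A : set R) (a k x y : R).
Local Notation ff := (@pos_part_put R).

Lemma ge0_integral_ge_atom (g : R -> R) A a : measurable A -> A a ->
  measurable_fun A (fun t => (g t)%:E) -> (forall t, 0 <= g t) ->
  ((g a * prob eta [set a])%:E <= \int[eta]_(t in A) (g t)%:E)%E.
Proof.
move=> mA Aa mg g0; rewrite EFinM -probE // -integral_cst //.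
rewrite (eq_integral (fun t => (g t)%:E)); last by move=> t; rewrite inE /= => ->.
apply: ge0_subset_integral => //; first by move=> t _; rewrite lee_fin.
by move=> t ->.
Qed.

Lemma measurable_EFin_pos_part_put A k : measurable_fun A (fun t => (ff k t)%:E).
Proof.
by apply/measurable_EFinP/measurable_funTS; exact: measurable_pos_part_put.
Qed.

Lemma measurable_EFin_pos_part_put_incr A x y :
  measurable_fun A (fun t => (ff y t - ff x t)%:E).
Proof.
by apply/measurable_EFinP/measurable_funTS/measurable_funB;
  exact: measurable_pos_part_put.
Qed.

Hypothesis eta_moment : finite_first_moment eta.

Lemma integrable_pos_part_put A k : measurable A ->
  eta.-integrable A (fun x => (ff k x)%:E).
Proof.
move=> mA; apply: integrableS (subsetT A) _ => //.
apply: (@le_integrable _ _ _ eta _ measurableT _ (fun x => `|k|%:E + `|x%:E|)%E).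
- exact: measurable_EFin_pos_part_put.
- move=> x _; rewrite !abse_EFin lee_fin.
  by rewrite (ger0_norm (pos_part_put_ge0 _ _)) ger0_norm ?pos_part_put_le.
- apply: (integrableD measurableT (f := EFin \o cst `|k|)).
    exact: finite_measure_integrable_cst.
  exact: integrable_abse eta_moment.
Qed.

Definition put_on A k := fine (\int[eta]_(x in A) (ff k x)%:E)%E.

Lemma put_onE A k : measurable A ->
  (\int[eta]_(x in A) (ff k x)%:E)%E = (put_on A k)%:E.
Proof.
by move=> mA; rewrite fineK // integrable_fin_num // integrable_pos_part_put.
Qed.

Lemma put_onU A B k : measurable A -> measurable B -> A `&` B = set0 ->
  put_on (A `|` B) k = put_on A k + put_on B k.
Proof.
move=> mA mB AB; apply/EFin_inj; rewrite EFinD -!put_onE //; last exact: measurableU.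
rewrite ge0_integral_setU //; last exact/disj_set2P.
- exact: measurable_EFin_pos_part_put.
- by move=> t _; rewrite lee_fin pos_part_put_ge0.
Qed.

Lemma put_on_incrE A x y : measurable A -> x <= y ->
  (put_on A y)%:E = ((put_on A x)%:E + \int[eta]_(t in A) (ff y t - ff x t)%:E)%E.
Proof.
move=> mA xy; rewrite -!put_onE // -ge0_integralD //.
- by apply: eq_integral => t _; rewrite -EFinD addrC subrK.
- by move=> t _; rewrite lee_fin pos_part_put_ge0.
- exact: measurable_EFin_pos_part_put.
- by move=> t _; rewrite lee_fin; case/andP: (pos_part_put_incr t xy).
- exact: measurable_EFin_pos_part_put_incr.
Qed.

Lemma put_on_incr_le A a x y : measurable A -> (forall t, A t -> a <= t) -> x <= y ->
  put_on A y - put_on A x <= (ff y a - ff x a) * prob eta A.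
Proof.
move=> mA Aa xy; rewrite lerBlDl -lee_fin (put_on_incrE mA xy) EFinD leeD2l //.
rewrite EFinM -probE // -integral_cst //; apply: ge0_le_integral => //.
- by move=> t _; rewrite lee_fin; case/andP: (pos_part_put_incr t xy).
- exact: measurable_EFin_pos_part_put_incr.
- by move=> t At; rewrite lee_fin pos_part_put_incr_antitone // Aa.
Qed.

Lemma put_on_incr_ge_atom A a x y : measurable A -> A a -> x <= y ->
  (ff y a - ff x a) * prob eta [set a] <= put_on A y - put_on A x.
Proof.
move=> mA Aa xy; rewrite lerBrDl -lee_fin (put_on_incrE mA xy) EFinD leeD2l //.
apply: ge0_integral_ge_atom => //; first exact: measurable_EFin_pos_part_put_incr.
by move=> t; case/andP: (pos_part_put_incr t xy).
Qed.

Lemma put_on_ge_atom A a k : measurable A -> A a ->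
  ff k a * prob eta [set a] <= put_on A k.
Proof.
move=> mA Aa; rewrite -lee_fin -put_onE //; apply: ge0_integral_ge_atom => //.
- exact: measurable_EFin_pos_part_put.
- exact: pos_part_put_ge0.
Qed.

End PutIntegral.

(** * Truncated put prices *)

Section RaySplitting.
Variable R : realType.
Implicit Types a b : R.

Lemma setNyo_split a b : a <= b -> `]-oo, b[ = `]-oo, a[ `|` `[a, b[.
Proof. by move=> ab; rewrite -itv_bndbnd_setU //= bnd_simp. Qed.

Lemma setNyo_itvcoI a b : `]-oo, a[ `&` `[a, b[ = set0.
Proof.
apply/eqP/lt_disjoint => x y; rewrite !in_itv /= => xa /andP[ay _].
exact: lt_le_trans xa ay.
Qed.

Lemma setNyo1I a : `]-oo, a[ `&` [set a] = set0.
Proof.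
by rewrite -subset0 => t [] /=; rewrite in_itv /= => + ta; rewrite ta ltxx.
Qed.

End RaySplitting.

Section TruncatedPut.
Variables (R : realType) (mu : probability R R).
Hypothesis mu_moment : finite_first_moment mu.
Local Notation ff := (@pos_part_put R).
Local Notation G := (quantile mu).

Lemma put_fun_subE w k : put_fun_sub mu w k =
  put_on mu `]-oo, G w[ k + (w - prob mu `]-oo, G w[) * ff k (G w).
Proof. by []. Qed.

Lemma prob_quantile_atom w : 0 < w -> w < 1 ->
  w <= prob mu `]-oo, G w[ + prob mu [set G w].
Proof.
by move=> w0 w1; rewrite -probU ?setNyo1I ?setUitv1 // prob_le_quantile.
Qed.

Lemma put_fun_sub_le w k : 0 < w -> w < 1 -> put_fun_sub mu w k <= put_fun mu k.
Proof.
move=> w0 w1; rewrite put_fun_subE.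
have -> : put_fun mu k = put_on mu [set: R] k by [].
rewrite -(itv_setU_setT true (G w)) put_onU //; last exact/eqP/disjoint_rays.
have := @put_on_ge_atom _ _ mu_moment `[G w, +oo[ (G w) k (measurable_itv _).
rewrite /= in_itv /= lexx => /(_ isT).
have := prob_quantile_atom w0 w1; have := pos_part_put_ge0 k (G w); nra.
Qed.

End TruncatedPut.

Section TruncatedPutIncrements.
Variables (R : realType) (mu : probability R R) (u v : R).
Hypotheses (mu_moment : finite_first_moment mu)
  (u_gt0 : 0 < u) (uv : u < v) (v_lt1 : v < 1).
Local Notation ff := (@pos_part_put R).
Local Notation Gu := (quantile mu u).
Local Notation Gv := (quantile mu v).
Local Notation A := `]-oo, Gu[.
Local Notation B := `[Gu, Gv[.
Local Notation D k := (put_fun_sub mu v k - put_fun_sub mu u k).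

Let GuGv : Gu <= Gv := le_quantile mu u_gt0 (ltW uv) v_lt1.

Lemma put_fun_sub_diffE k : D k =
  put_on mu B k + (v - prob mu A - prob mu B) * ff k Gv - (u - prob mu A) * ff k Gu.
Proof.
rewrite !put_fun_subE (setNyo_split GuGv) put_onU ?probU ?setNyo_itvcoI //.
(* Generalizing the integrals keeps [ring] from unfolding them. *)
by move: (put_on _ _ _) (put_on _ _ _) (prob _ _) (prob _ _) => IA IB pA pB; ring.
Qed.

Let u_lt1 : u < 1 := lt_trans uv v_lt1.

Let probAB_le : prob mu A + prob mu B <= v.
Proof.
rewrite -probU ?setNyo_itvcoI // -setNyo_split //.
exact: prob_lt_quantile (lt_trans u_gt0 uv) v_lt1.
Qed.

Let prob_atom_ge : u <= prob mu A + prob mu [set Gu] :=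
  prob_quantile_atom mu u_gt0 u_lt1.

Lemma put_fun_sub_diff_incr_ge0 x y : x <= y -> 0 <= D y - D x.
Proof.
move=> xy; rewrite !put_fun_sub_diffE.
have /andP[du0 _] := pos_part_put_incr Gu xy.
have /andP[dv0 _] := pos_part_put_incr Gv xy.
have [GuGv'|GvGu] := ltP Gu Gv.
- have := @put_on_incr_ge_atom _ _ mu_moment B Gu x y (measurable_itv _).
  rewrite /= in_itv /= lexx GuGv' => /(_ isT xy).
  have : (u - prob mu A) * (ff y Gu - ff x Gu) <=
      prob mu [set Gu] * (ff y Gu - ff x Gu).
    by rewrite ler_wpM2r //; have := prob_atom_ge; lra.
  have : 0 <= (v - prob mu A - prob mu B) * (ff y Gv - ff x Gv).
    by rewrite mulr_ge0 //; have := probAB_le; lra.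
  lra.
- have eG : Gv = Gu by apply/eqP; rewrite eq_le GvGu GuGv.
  rewrite eG set_itvxx /prob measure0 /put_on !integral_set0 /=.
  have : 0 <= (v - u) * (ff y Gu - ff x Gu) by rewrite mulr_ge0 // subr_ge0 (ltW uv).
  lra.
Qed.

Lemma put_fun_sub_diff_incr_le x y : x <= y -> D y - D x <= (v - u) * (y - x).
Proof.
move=> xy; rewrite !put_fun_sub_diffE.
have /andP[du0 du1] := pos_part_put_incr Gu xy.
have /andP[dv0 dv1] := pos_part_put_incr Gv xy.
have dvu := pos_part_put_incr_antitone xy GuGv.
have B_ge t : B t -> Gu <= t by rewrite /= in_itv => /andP[].
have := put_on_incr_le mu_moment (measurable_itv _) B_ge xy.
have [pu|pu] := lerP u (prob mu A + prob mu B).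
- have : (v - prob mu A - prob mu B) * (ff y Gv - ff x Gv) <=
      (v - prob mu A - prob mu B) * (ff y Gu - ff x Gu).
    by rewrite ler_wpM2l //; have := probAB_le; lra.
  have : (v - u) * (ff y Gu - ff x Gu) <= (v - u) * (y - x).
    by rewrite ler_wpM2l // subr_ge0 (ltW uv).
  lra.
- have : (prob mu A + prob mu B - u) * (ff y Gu - ff x Gu) <=
      (prob mu A + prob mu B - u) * (ff y Gv - ff x Gv).
    by rewrite ler_wnM2l //; lra.
  have : (v - u) * (ff y Gv - ff x Gv) <= (v - u) * (y - x).
    by rewrite ler_wpM2l // subr_ge0 (ltW uv).
  lra.
Qed.

End TruncatedPutIncrements.

Section ConvexOrder.
Variables (R : realType) (mu nu : probability R R).
Hypotheses (mu_moment : finite_first_moment mu) (nu_moment : finite_first_moment nu).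
Hypothesis mu_cx_nu : cx_le mu nu.

Lemma cx_le_put_fun k : put_fun mu k <= put_fun nu k.
Proof.
have := mu_cx_nu (convex_pos_part_put k).
by rewrite (put_onE mu_moment) // (put_onE nu_moment) // lee_fin.
Qed.

Lemma Efun_ge0 w k : 0 < w -> w < 1 -> 0 <= Efun mu nu w k.
Proof.
move=> w0 w1; rewrite subr_ge0.
exact: le_trans (put_fun_sub_le mu_moment k w0 w1) (cx_le_put_fun k).
Qed.

Lemma Efun_convex_minorant w : 0 < w -> w < 1 -> has_convex_minorant (Efun mu nu w).
Proof.
move=> w0 w1; exists (fun y => 0 + 0 * y); split; first exact: convex_affine.
by move=> y; rewrite mul0r addr0 Efun_ge0.
Qed.

End ConvexOrder.

Theorem lemma6p4 (R : realType) (mu nu : probability R R)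
  (hmu : finite_first_moment mu) (hnu : finite_first_moment nu)
  (hcx : cx_le mu nu)
  (hint : is_interval [set k : R | 0 < Dfun mu nu k])
  (u v : R) (hu : 0 < u) (huv : u < v) (hv : v < 1) :
  forall k : R,
    (left_deriv (convex_env (Efun mu nu u)) k - (v - u)
       <= left_deriv (convex_env (Efun mu nu v)) k
     /\ left_deriv (convex_env (Efun mu nu v)) k
       <= left_deriv (convex_env (Efun mu nu u)) k)
    /\
    (right_deriv (convex_env (Efun mu nu u)) k - (v - u)
       <= right_deriv (convex_env (Efun mu nu v)) k
     /\ right_deriv (convex_env (Efun mu nu v)) k
       <= right_deriv (convex_env (Efun mu nu u)) k).
Proof.
move=> k.
have Eu := Efun_convex_minorant hmu hnu hcx hu (lt_trans huv hv).
have Ev := Efun_convex_minorant hmu hnu hcx (lt_trans hu huv) hv.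
have Euv x : Efun mu nu u x - Efun mu nu v x =
    put_fun_sub mu v x - put_fun_sub mu u x.
  by rewrite /Efun opprB addrC addrA subrK.
have incr_ge0 x y : x <= y -> 0 * (y - x) <=
    (Efun mu nu u y - Efun mu nu v y) - (Efun mu nu u x - Efun mu nu v x).
  by rewrite mul0r !Euv; exact: put_fun_sub_diff_incr_ge0.
have incr_le x y : x <= y -> - (v - u) * (y - x) <=
    (Efun mu nu v y - Efun mu nu u y) - (Efun mu nu v x - Efun mu nu u x).
  rewrite -[_ - Efun mu nu u y]opprB -[_ - Efun mu nu u x]opprB !Euv.
  by rewrite -opprD mulNr lerN2; exact: put_fun_sub_diff_incr_le.
split; split.
- exact: left_deriv_env_add_le Eu Ev incr_le k.
- by have := left_deriv_env_add_le Ev Eu incr_ge0 k; rewrite addr0.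
- exact: right_deriv_env_add_le Eu Ev incr_le k.
- by have := right_deriv_env_add_le Ev Eu incr_ge0 k; rewrite addr0.
Qed.
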